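(* Let $d=2$ and assume the polynomial degree satisfies $1\le M\le 13$. There exist constants $c_1>0$, $c_2>0$ independent of $h$ such that for every interface $\Gamma^{k,\ell}$ and every $\eta_{\ell,k}\in\mathcal Y_h^{\ell,k}\cap H^1_0(\Gamma^{k,\ell})$ there exists $\psi_{\ell,k}\in\tilde W_h^{\ell,k}$ with $$\int_{\Gamma^{k,\ell}}\big(\eta_{\ell,k}+\pi_{k,\ell}(\eta_{\ell,k})\big)\psi_{\ell,k}\ge c_1\|\eta_{\ell,k}\|^2_{L^2(\Gamma^{k,\ell})},\qquad \|\psi_{\ell,k}\|_{L^2(\Gamma^{k,\ell})}\le c_2\|\eta_{\ell,k}\|_{L^2(\Gamma^{k,\ell})}.$$
   Context: $\Omega\subset\mathbb R^2$ is decomposed into non-overlapping geometrically conforming subdomains $\Omega^k$; $\Gamma^{k,\ell}=\partial\Omega^k\cap\partial\Omega^\ell$ is a common edge. Each $\Omega^k$ has its own uniformly regular triangular mesh $\mathcal T_h^k$ ($h_T/\rho_T\le\sigma$, $\tau h\le h_T$ with $\sigma,\tau$ independent of $h$, $h$ the maximal element diameter), possibly non-matching across interfaces. $Y_h^k$ = continuous piecewise $\mathcal P_M$ functions on $\mathcal T_h^k$; $\mathcal Y_h^{k,\ell}$ is the space of traces on $\Gamma^{k,\ell}$ of $Y_h^k$ (a 1D finite element space on the induced mesh with consecutive vertices $x_0,\dots,x_n$, $x_0,x_n$ the endpoints of $\Gamma^{k,\ell}$); $\tilde W_h^{k,\ell}$ is the subspace of $\mathcal Y_h^{k,\ell}$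 of functions that are polynomials of degree $\le M-1$ on $[x_0,x_1]$ and $[x_{n-1},x_n]$. $\mathcal Y_h^{\ell,k},\tilde W_h^{\ell,k}$ are the analogous spaces built from the mesh of $\Omega^\ell$. $\pi_{k,\ell}$ is the $L^2(\Gamma^{k,\ell})$-orthogonal projection onto $\tilde W_h^{k,\ell}$. *)

From Stdlib Require Import Reals.
From Coquelicot Require Import Coquelicot.
Open Scope R_scope.

Definition poly_le (k : nat) (p : R -> R) : Prop :=
  exists c : nat -> R, forall t, p t = sum_f_R0 (fun j => c j * t ^ j) k.

(* A 1D mesh of the interface, parametrized by arc length as [0, L]:
   consecutive vertices x 0 = 0 < x 1 < ... < x n = L, all element lengths
   between kappa*h and h (uniform regularity of the 2D mesh it is induced by). *)
Definition mesh1d (L kappa h : R) (n : nat) (x : nat -> R) : Prop :=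
  (1 <= n)%nat /\ x 0%nat = 0 /\ x n = L /\
  forall i, (i < n)%nat -> kappa * h <= x (S i) - x i <= h.

(* Trace space Y: continuous piecewise P_M functions on the mesh (continuity is
   automatic: on each closed element f coincides with a polynomial). *)
Definition Ytr (M n : nat) (x : nat -> R) (f : R -> R) : Prop :=
  forall i, (i < n)%nat ->
    exists p, poly_le M p /\ forall t, x i <= t <= x (S i) -> f t = p t.

Definition Wtil (M n : nat) (x : nat -> R) (f : R -> R) : Prop :=
  Ytr M n x f /\
  (exists p, poly_le (M - 1) p /\ forall t, x 0%nat <= t <= x 1%nat -> f t = p t) /\
  (exists p, poly_le (M - 1) p /\
     forall t, x (pred n) <= t <= x n -> f t = p t).

Definition L2ip (L : R) (f g : R -> R) : R := RInt (fun t => f t * g t) 0 L.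
Definition L2norm (L : R) (f : R -> R) : R := sqrt (L2ip L f f).

Definition is_L2proj (L : R) (P : (R -> R) -> Prop) (f g : R -> R) : Prop :=
  P g /\ forall w, P w -> L2ip L (fun t => f t - g t) w = 0.

From Stdlib Require Import Reals Lra Lia ZArith QArith Qreals List.
From Coquelicot Require Import Coquelicot.
Open Scope R_scope.
Import ListNotations.

(* Write P for the projection of eta.  Orthogonality gives
   (eta + P, psi) = (eta + P, psi) - (eta - P, P), and completing the square
   in P bounds this integrand below by eta psi - (psi - eta)^2 / 4, which is
   coercivity_gap eta psi + eta^2 / 100.  The same gap controls psi^2 by
   36 eta^2, so it suffices to find psi in W~ with a nonnegative integrated gap.
   Take psi = eta away from the two end elements, where the gap is
   99/100 eta^2.  On an end element eta is a polynomial of degree <= M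
   vanishing at the end of the interface; after an affine change of variables
   it is a polynomial p on [0,1] with p 0 = 0, and psi is the polynomial q of
   degree <= M - 1 with q 1 = p 1 maximizing 3/2 <p, q> - 1/4 <q, q>.  The
   resulting quadratic form in the coefficients of p is nonnegative, which is
   checked by an exact rational L^T D L factorization for every M <= 13. *)

Lemma sum_f_R0_swap (f : nat -> nat -> R) m n :
  sum_f_R0 (fun i => sum_f_R0 (fun j => f i j) n) m =
  sum_f_R0 (fun j => sum_f_R0 (fun i => f i j) m) n.
Proof.
  induction m as [|m IH]; simpl; [reflexivity|].
  rewrite IH, <- plus_sum. reflexivity.
Qed.

Lemma sum_f_R0_mult_l (f : nat -> R) x n :
  x * sum_f_R0 f n = sum_f_R0 (fun i => x * f i) n.
Proof. rewrite scal_sum. apply sum_eq; intros; ring. Qed.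

Lemma sum_f_R0_mult_r (f : nat -> R) x n :
  sum_f_R0 f n * x = sum_f_R0 (fun i => f i * x) n.
Proof. rewrite Rmult_comm, scal_sum. reflexivity. Qed.

Lemma sum_f_R0_nonneg (f : nat -> R) n :
  (forall i, (i <= n)%nat -> 0 <= f i) -> 0 <= sum_f_R0 f n.
Proof.
  induction n as [|n IH]; simpl; intros H; [apply H; lia|].
  apply Rplus_le_le_0_compat; [apply IH; intros; apply H|apply H]; lia.
Qed.

Lemma Q2R_frac (p : Z) (q : positive) : Q2R (p # q) = IZR p / IZR (Zpos q).
Proof. reflexivity. Qed.

Fixpoint qsum (f : nat -> Q) (n : nat) : Q :=
  match n with O => f O | S k => Qred (qsum f k + f (S k))%Q end.

Lemma qsum_ext f g n : (forall i, (i <= n)%nat -> f i = g i) -> qsum f n = qsum g n.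
Proof.
  induction n as [|n IH]; intros H; cbn [qsum]; [apply H; lia|].
  rewrite IH, H; [reflexivity|lia|intros; apply H; lia].
Qed.

Lemma Q2R_qsum f n : Q2R (qsum f n) = sum_f_R0 (fun i => Q2R (f i)) n.
Proof.
  induction n as [|n IH]; cbn [qsum sum_f_R0]; [reflexivity|].
  rewrite (Qeq_eqR _ _ (Qred_correct _)), Q2R_plus, IH. reflexivity.
Qed.

(** * Bilinear forms with rational kernels *)

(* Rational kernels make the coefficients of the forms below computable. *)
Definition bilin (K : nat -> nat -> Q) (a b : nat -> R) (m n : nat) : R :=
  sum_f_R0 (fun i => sum_f_R0 (fun j => Q2R (K i j) * a i * b j) n) m.

Definition lin_map (T : nat -> nat -> Q) (b : nat -> R) (n j : nat) : R :=
  sum_f_R0 (fun k => Q2R (T j k) * b k) n.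

Lemma bilin_ext K1 K2 a b m n :
  (forall i j, (i <= m)%nat -> (j <= n)%nat -> (K1 i j == K2 i j)%Q) ->
  bilin K1 a b m n = bilin K2 a b m n.
Proof.
  intros H; unfold bilin; apply sum_eq; intros i Hi; apply sum_eq; intros j Hj.
  rewrite (Qeq_eqR _ _ (H i j Hi Hj)); reflexivity.
Qed.

Lemma bilin_lin_map_r K T a b m n n' :
  bilin K a (lin_map T b n') m n =
  bilin (fun i k => qsum (fun j => K i j * T j k)%Q n) a b m n'.
Proof.
  unfold bilin, lin_map; apply sum_eq; intros i _.
  transitivity (sum_f_R0 (fun j => sum_f_R0 (fun k =>
    Q2R (K i j) * Q2R (T j k) * a i * b k) n') n).
  - apply sum_eq; intros j _. rewrite sum_f_R0_mult_l.
    apply sum_eq; intros; ring.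
  - rewrite sum_f_R0_swap. apply sum_eq; intros k _.
    rewrite Q2R_qsum, !sum_f_R0_mult_r. apply sum_eq; intros j _.
    rewrite Q2R_mult; ring.
Qed.

Lemma bilin_lin_map_l K T a b m n m' :
  bilin K (lin_map T a m') b m n =
  bilin (fun k j => qsum (fun i => T i k * K i j)%Q m) a b m' n.
Proof.
  unfold bilin, lin_map.
  transitivity (sum_f_R0 (fun i => sum_f_R0 (fun k => sum_f_R0 (fun j =>
    Q2R (T i k) * Q2R (K i j) * a k * b j) n) m') m).
  - apply sum_eq; intros i _. rewrite sum_f_R0_swap. apply sum_eq; intros j _.
    rewrite sum_f_R0_mult_l, sum_f_R0_mult_r. apply sum_eq; intros; ring.
  - rewrite sum_f_R0_swap. apply sum_eq; intros k _.
    rewrite sum_f_R0_swap. apply sum_eq; intros j _.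
    rewrite Q2R_qsum, !sum_f_R0_mult_r. apply sum_eq; intros i _.
    rewrite Q2R_mult; ring.
Qed.

Lemma bilin_plus K1 K2 a b m n :
  bilin (fun i j => K1 i j + K2 i j)%Q a b m n = bilin K1 a b m n + bilin K2 a b m n.
Proof.
  unfold bilin; rewrite <- plus_sum; apply sum_eq; intros.
  rewrite <- plus_sum; apply sum_eq; intros. rewrite Q2R_plus; ring.
Qed.

Lemma bilin_scal q K a b m n :
  bilin (fun i j => q * K i j)%Q a b m n = Q2R q * bilin K a b m n.
Proof.
  unfold bilin; rewrite sum_f_R0_mult_l; apply sum_eq; intros.
  rewrite sum_f_R0_mult_l; apply sum_eq; intros. rewrite Q2R_mult; ring.
Qed.

Lemma bilin_symmetrize K x n :
  bilin K x x n n = bilin (fun i j => (K i j + K j i) * (1#2))%Q x x n n.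
Proof.
  assert (Htr : bilin (fun i j => K j i) x x n n = bilin K x x n n).
  { unfold bilin. rewrite sum_f_R0_swap.
    apply sum_eq; intros; apply sum_eq; intros; ring. }
  rewrite (bilin_ext (fun i j => (K i j + K j i) * (1#2))%Q
                     (fun i j => (1#2) * (K i j + K j i))%Q) by (intros; ring).
  rewrite bilin_scal, bilin_plus, Htr, Q2R_frac. field.
Qed.

Lemma bilin_ldl K L D x n :
  (forall i j, (i <= n)%nat -> (j <= n)%nat ->
     (K i j == qsum (fun k => L k i * D k * L k j) n)%Q) ->
  bilin K x x n n =
  sum_f_R0 (fun k => Q2R (D k) * (sum_f_R0 (fun i => Q2R (L k i) * x i) n) ^ 2) n.
Proof.
  intros HK. rewrite (bilin_ext _ _ _ _ _ _ HK). unfold bilin.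
  transitivity (sum_f_R0 (fun i => sum_f_R0 (fun k => sum_f_R0 (fun j =>
    Q2R (D k) * (Q2R (L k i) * x i) * (Q2R (L k j) * x j)) n) n) n).
  - apply sum_eq; intros i _. rewrite <- sum_f_R0_swap. apply sum_eq; intros j _.
    rewrite Q2R_qsum, !sum_f_R0_mult_r. apply sum_eq; intros k _.
    rewrite !Q2R_mult; ring.
  - rewrite sum_f_R0_swap. apply sum_eq; intros k _.
    replace (Q2R (D k) * _ ^ 2) with
      (Q2R (D k) * sum_f_R0 (fun i => Q2R (L k i) * x i) n *
                   sum_f_R0 (fun j => Q2R (L k j) * x j) n) by ring.
    rewrite sum_f_R0_mult_l, sum_f_R0_swap. apply sum_eq; intros j _.
    rewrite sum_f_R0_mult_l, sum_f_R0_mult_r. apply sum_eq; intros i _. ring.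
Qed.

(** * Exact certificates on the reference element *)

Definition hilbert (i j : nat) : Q := 1 # Pos.of_succ_nat (i + j).

(* Kernel of [b |-> 3/2 <p, q> - 1/4 <q, q> - 13/50 <p, p>], where
   [p = sum_i b_i s^(i+1)], [q = sum_j (T b)_j s^j] and [<.,.>] is the
   L^2(0,1) product.  [TH] stands for the product [T^T H]; it is a separate
   argument so that the certificate check can evaluate it only once. *)
Definition ref_form (T TH : nat -> nat -> Q) (n i k : nat) : Q :=
  ((3#2) * qsum (fun j => hilbert (S i) j * T j k) n +
   ((-1#4) * qsum (fun j => TH i j * T j k) n +
    (-13#50) * hilbert (S i) (S k)))%Q.

Definition hilbert_left (T : nat -> nat -> Q) (n i j : nat) : Q :=
  qsum (fun i' => T i' i * hilbert i' j)%Q n.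

Lemma bilin_ref_form T b n :
  bilin (ref_form T (hilbert_left T n) n) b b n n =
  3/2 * bilin (fun i j => hilbert (S i) j) b (lin_map T b n) n n
  - 1/4 * bilin hilbert (lin_map T b n) (lin_map T b n) n n
  - 13/50 * bilin (fun i j => hilbert (S i) (S j)) b b n n.
Proof.
  rewrite bilin_lin_map_r, bilin_lin_map_l, bilin_lin_map_r.
  unfold ref_form, hilbert_left. rewrite !bilin_plus, !bilin_scal, !Q2R_frac. lra.
Qed.

Definition all_upto (f : nat -> bool) (n : nat) : bool := forallb f (seq 0 (S n)).

Lemma all_upto_spec f n : all_upto f n = true -> forall i, (i <= n)%nat -> f i = true.
Proof.
  unfold all_upto; rewrite forallb_forall; intros H i Hi; apply H, in_seq; lia.
Qed.

Definition ldl_certifies (T TH L : nat -> nat -> Q) (D : nat -> Q) (n : nat) : bool :=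
  all_upto (fun k => Qeq_bool (qsum (fun j => T j k) n) 1) n &&
  all_upto (fun k => Qle_bool 0 (D k)) n &&
  all_upto (fun i => all_upto (fun j =>
     Qeq_bool ((ref_form T TH n i j + ref_form T TH n j i) * (1#2))%Q
              (qsum (fun k => L k i * D k * L k j)%Q n)) n) n.

Lemma ldl_certifies_sound T TH L D n : ldl_certifies T TH L D n = true ->
  (forall i j, (i <= n)%nat -> (j <= n)%nat -> TH i j = hilbert_left T n i j) ->
  (forall b, sum_f_R0 (lin_map T b n) n = sum_f_R0 b n) /\
  (forall b, 0 <= bilin (ref_form T (hilbert_left T n) n) b b n n).
Proof.
  unfold ldl_certifies; intros Hcert HTH.
  apply andb_prop in Hcert as [Hcert Hldl]; apply andb_prop in Hcert as [Hcol HD].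
  pose proof (all_upto_spec _ _ Hcol) as Hcol'.
  pose proof (all_upto_spec _ _ HD) as HD'.
  pose proof (all_upto_spec _ _ Hldl) as Hldl'.
  split; intros b.
  - unfold lin_map. rewrite sum_f_R0_swap. apply sum_eq; intros k Hk.
    rewrite <- sum_f_R0_mult_r, <- Q2R_qsum.
    rewrite (Qeq_eqR _ 1) by (apply Qeq_bool_eq, Hcol', Hk).
    rewrite Q2R_frac; lra.
  - rewrite (bilin_ext _ (ref_form T TH n)), bilin_symmetrize, (bilin_ldl _ L D).
    + apply sum_f_R0_nonneg; intros k Hk. apply Rmult_le_pos; [|apply pow2_ge_0].
      replace 0 with (Q2R 0) by (rewrite Q2R_frac; lra).
      apply Qle_Rle, Qle_bool_imp_le, HD', Hk.
    + intros i j Hi Hj. apply Qeq_bool_eq, (all_upto_spec _ _ (Hldl' i Hi) j Hj).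
    + intros i k Hi _. unfold ref_form.
      rewrite (qsum_ext (fun j => hilbert_left T n i j * T j k)%Q (fun j => TH i j * T j k)%Q);
        [reflexivity|]. intros j Hj. rewrite HTH; trivial.
Qed.

Section Rational_linear_algebra.
Local Open Scope Q_scope.

Definition axpy (u : list Q) (c : Q) (v : list Q) : list Q :=
  map (fun xy => Qred (fst xy - c * snd xy)) (combine u v).

(* Gaussian elimination without pivoting: the solution matrix [X] of
   [A X = B], for [A] whose leading principal minors are nonzero. *)
Fixpoint gauss_solve (fuel : nat) (A B : list (list Q)) : list (list Q) :=
  match fuel, A, B with
  | S f, r :: rs, b :: bs =>
      let a := hd 0 r in
      let cs := map (fun s => Qred (hd 0 s / a)) rs in
      let xs := gauss_solve f
        (map (fun cr => axpy (tl (snd cr)) (fst cr) (tl r)) (combine cs rs))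
        (map (fun cb => axpy (snd cb) (fst cb) b) (combine cs bs)) in
      map (fun v => Qred (v / a))
          (fold_left (fun acc cx => axpy acc (fst cx) (snd cx)) (combine (tl r) xs) b)
        :: xs
  | _, _, _ => []
  end.

(* [L^T D L] factorization of a symmetric matrix by repeated Schur
   complements; the rows of [L] are padded with [k] leading zeros. *)
Fixpoint ldl (fuel k : nat) (A : list (list Q)) : list (list Q) * list Q :=
  match fuel, A with
  | S f, r :: rs =>
      let a := hd 0 r in
      let l := map (fun x => Qred (x / a)) (tl r) in
      let LD := ldl f (S k) (map (fun s => axpy (tl s) (hd 0 s) l) rs) in
      ((repeat 0 k ++ 1 :: l) :: fst LD, a :: snd LD)
  | _, _ => ([], [])
  end.

Definition mat_of (l : list (list Q)) (i j : nat) : Q := nth j (nth i l nil) 0.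
Definition vec_of (l : list Q) (i : nat) : Q := nth i l 0.
Definition tabulate (n : nat) (f : nat -> nat -> Q) : list (list Q) :=
  map (fun i => map (f i) (seq 0 (S n))) (seq 0 (S n)).

(* Column [k] holds the coefficients of the polynomial [q] of degree [<= n]
   maximizing [3/2 <s^(k+1), q> - 1/4 <q, q>] subject to [q 1 = 1]: the
   Lagrange conditions [H q + mu 1 = 3 <s^(k+1), s^j>_j], [sum q = 1]. *)
Definition ref_choice (n : nat) : list (list Q) :=
  let idx := seq 0 (S n) in
  firstn (S n) (gauss_solve (S (S n))
    (map (fun j => map (hilbert j) idx ++ [1]) idx ++ [repeat 1 (S n) ++ [0]])
    (map (fun j => map (fun k => 3 * hilbert (S k) j)%Q idx) idx ++ [repeat 1 (S n)])).

End Rational_linear_algebra.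

Lemma nth_map_seq {A} (f : nat -> A) n i d : (i < n)%nat -> nth i (map f (seq 0 n)) d = f i.
Proof.
  intros Hi. rewrite (nth_indep _ _ (f 0%nat)) by (rewrite length_map, length_seq; lia).
  rewrite map_nth, seq_nth by lia. reflexivity.
Qed.

Lemma mat_of_tabulate n f i j : (i <= n)%nat -> (j <= n)%nat -> mat_of (tabulate n f) i j = f i j.
Proof. intros Hi Hj. unfold mat_of, tabulate. rewrite !nth_map_seq by lia. reflexivity. Qed.

Definition ref_certified (n : nat) : bool :=
  let T := mat_of (ref_choice n) in
  let TH := mat_of (tabulate n (hilbert_left T n)) in
  let LD := ldl (S n) 0
    (tabulate n (fun i j => Qred ((ref_form T TH n i j + ref_form T TH n j i) * (1#2))%Q)) in
  ldl_certifies T TH (mat_of (fst LD)) (vec_of (snd LD)) n.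

Lemma ref_certified_le_12 n : (n <= 12)%nat -> ref_certified n = true.
Proof.
  assert (H : forallb ref_certified (seq 0 13) = true) by (vm_compute; reflexivity).
  rewrite forallb_forall in H. intros Hn; apply H, in_seq; lia.
Qed.

(** * Polynomials and the choice on one element *)

Lemma continuity_sum_monomials (c : nat -> R) k :
  continuity (fun t => sum_f_R0 (fun j => c j * t ^ j) k).
Proof.
  assert (Hmon : forall j, continuity (fun t => c j * t ^ j)).
  { intros j. apply continuity_mult; [|apply derivable_continuous, derivable_pow].
    apply continuity_const; intros ? ?; reflexivity. }
  induction k as [|k IH]; cbn [sum_f_R0]; [apply Hmon|].
  apply continuity_plus; [exact IH|apply Hmon].
Qed.

Lemma poly_le_continuity k p : poly_le k p -> continuity p.
Proof.
  intros [c Hc] x. apply continuity_pt_ext with (fun t => sum_f_R0 (fun j => c j * t ^ j) k).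
  - intros t; symmetry; apply Hc.
  - apply continuity_sum_monomials.
Qed.

Lemma poly_le_ext k p q : poly_le k p -> (forall t, q t = p t) -> poly_le k q.
Proof. intros [c Hc] H; exists c; intros t; rewrite H; auto. Qed.

Lemma poly_le_S k p : poly_le k p -> poly_le (S k) p.
Proof.
  intros [c Hc]. exists (fun j => if Nat.eqb j (S k) then 0 else c j).
  intros t; rewrite Hc; cbn [sum_f_R0]; rewrite Nat.eqb_refl.
  rewrite (sum_eq (fun j => (if Nat.eqb j (S k) then 0 else c j) * t ^ j)
                  (fun j => c j * t ^ j)); [ring|].
  intros i Hi. destruct (Nat.eqb_spec i (S k)); [lia|reflexivity].
Qed.

Lemma poly_le_mono k m p : (k <= m)%nat -> poly_le k p -> poly_le m p.
Proof. induction 1; auto using poly_le_S. Qed.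

Lemma poly_le_plus k p q : poly_le k p -> poly_le k q -> poly_le k (fun t => p t + q t).
Proof.
  intros [c Hc] [d Hd]; exists (fun j => c j + d j); intros t.
  rewrite Hc, Hd, <- plus_sum; apply sum_eq; intros; ring.
Qed.

Lemma poly_le_scal k a p : poly_le k p -> poly_le k (fun t => a * p t).
Proof.
  intros [c Hc]; exists (fun j => a * c j); intros t.
  rewrite Hc, sum_f_R0_mult_l; apply sum_eq; intros; ring.
Qed.

Lemma poly_le_const k a : poly_le k (fun _ => a).
Proof. apply (poly_le_mono 0); [lia|]. exists (fun _ => a); intros; simpl; ring. Qed.

Lemma poly_le_mult_id k p : poly_le k p -> poly_le (S k) (fun t => t * p t).
Proof.
  intros [c Hc]. exists (fun j => match j with O => 0 | S i => c i end).
  intros t. rewrite Hc, (decomp_sum _ (S k)), sum_f_R0_mult_l by lia.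
  simpl; rewrite Rmult_0_l, Rplus_0_l. apply sum_eq; intros; simpl; ring.
Qed.

Lemma poly_le_pow_affine a b j : poly_le j (fun t => (a * t + b) ^ j).
Proof.
  induction j as [|j IH]; simpl; [apply poly_le_const|].
  apply poly_le_ext with (fun t => a * (t * (a * t + b) ^ j) + b * (a * t + b) ^ j);
    [|intros; ring].
  apply poly_le_plus; [apply poly_le_scal, poly_le_mult_id, IH|].
  apply poly_le_S, poly_le_scal, IH.
Qed.

Lemma poly_le_comp_affine k p a b : poly_le k p -> poly_le k (fun t => p (a * t + b)).
Proof.
  intros [c Hc].
  assert (Hpart : forall m, (m <= k)%nat ->
            poly_le k (fun t => sum_f_R0 (fun j => c j * (a * t + b) ^ j) m)).
  { induction m as [|m IH]; intros Hm; cbn [sum_f_R0].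
    - apply poly_le_scal, (poly_le_mono 0); [lia|apply poly_le_pow_affine].
    - apply poly_le_plus; [apply IH; lia|].
      apply poly_le_scal, (poly_le_mono (S m)); [lia|apply poly_le_pow_affine]. }
  apply poly_le_ext with (1 := Hpart k (le_n k)). intros; apply Hc.
Qed.

Lemma poly_le_vanishing_at_0 n p : poly_le (S n) p -> p 0 = 0 ->
  exists b, forall s, p s = sum_f_R0 (fun i => b i * s ^ S i) n.
Proof.
  intros [c Hc] Hp0. exists (fun i => c (S i)).
  assert (Hsplit : forall s, p s = c O + sum_f_R0 (fun i => c (S i) * s ^ S i) n).
  { intros s. rewrite Hc, decomp_sum by lia. simpl; ring. }
  assert (Hc0 : c O = 0).
  { rewrite Hsplit, (sum_eq _ (fun _ => 0)), sum_cte in Hp0; [lra|].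
    intros i _; simpl; ring. }
  intros s; rewrite Hsplit, Hc0; ring.
Qed.

Lemma Q2R_hilbert i j : Q2R (hilbert i j) = / INR (S (i + j)).
Proof.
  unfold hilbert; rewrite Q2R_frac, Zpos_P_of_succ_nat, <- Nat2Z.inj_succ,
    <- INR_IZR_INZ. field. apply not_0_INR; lia.
Qed.

Lemma is_RInt_monomial_products o1 o2 (a b : nat -> R) m n :
  is_RInt (fun s => sum_f_R0 (fun i => a i * s ^ (o1 + i)) m *
                    sum_f_R0 (fun j => b j * s ^ (o2 + j)) n) 0 1
          (bilin (fun i j => hilbert (o1 + i) (o2 + j)) a b m n).
Proof.
  assert (Hmon : forall k, is_RInt (fun s => s ^ k) 0 1 (/ INR (S k))).
  { intros k. replace (/ INR (S k)) with (1 ^ S k / INR (S k) - 0 ^ S k / INR (S k))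
      by (rewrite pow1, pow_i by lia; unfold Rdiv; ring).
    apply is_RInt_pow. }
  assert (Hsum : forall (f : nat -> R -> R) (I : nat -> R) k,
            (forall i, is_RInt (f i) 0 1 (I i)) ->
            is_RInt (fun s => sum_f_R0 (fun i => f i s) k) 0 1 (sum_f_R0 I k)).
  { intros f I k HI; induction k as [|k IH]; [apply HI|].
    apply (is_RInt_plus (fun s => sum_f_R0 (fun i => f i s) k)); auto. }
  unfold bilin. eapply is_RInt_ext.
  2:{ apply Hsum; intros i; apply Hsum; intros j.
      rewrite Q2R_hilbert.
      replace (/ INR (S (o1 + i + (o2 + j))) * a i * b j)
        with (a i * b j * / INR (S (o1 + i + (o2 + j)))) by ring.
      apply (is_RInt_scal (fun s => s ^ (o1 + i + (o2 + j)))), Hmon. }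
  intros x _. rewrite sum_f_R0_mult_r. apply sum_eq; intros i _.
  rewrite sum_f_R0_mult_l. apply sum_eq; intros j _.
  rewrite pow_add; change (scal ?u ?v) with (u * v); ring.
Qed.

(* Its [1/100] is the constant [c1] of the theorem. *)
Definition coercivity_gap (x y : R) : R := x * y - (y - x) ^ 2 / 4 - x ^ 2 / 100.

Lemma is_RInt_lincomb3 (f g h : R -> R) a b x y z If Ig Ih :
  is_RInt f a b If -> is_RInt g a b Ig -> is_RInt h a b Ih ->
  is_RInt (fun s => x * f s + y * g s + z * h s) a b (x * If + y * Ig + z * Ih).
Proof.
  intros Hf Hg Hh.
  exact (is_RInt_plus _ _ _ _ _ _ (is_RInt_plus _ _ _ _ _ _
    (is_RInt_scal _ _ _ x _ Hf) (is_RInt_scal _ _ _ y _ Hg)) (is_RInt_scal _ _ _ z _ Hh)).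
Qed.

Lemma is_RInt_coercivity_gap_monomials (b d : nat -> R) n :
  is_RInt (fun s => coercivity_gap (sum_f_R0 (fun i => b i * s ^ S i) n)
                                   (sum_f_R0 (fun j => d j * s ^ j) n)) 0 1
    (3/2 * bilin (fun i j => hilbert (S i) j) b d n n
     - 1/4 * bilin hilbert d d n n
     - 13/50 * bilin (fun i j => hilbert (S i) (S j)) b b n n).
Proof.
  unfold Rminus; rewrite !Ropp_mult_distr_l.
  eapply is_RInt_ext; [|apply is_RInt_lincomb3;
    [apply (is_RInt_monomial_products 1 0 b d n n)
    |apply (is_RInt_monomial_products 0 0 d d n n)
    |apply (is_RInt_monomial_products 1 1 b b n n)]].
  intros s _. unfold coercivity_gap. cbn [Nat.add].
  lazymatch goal with |- ?u = ?v => change (@eq R u v) end. field.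
Qed.

Lemma certified_reference_choice n : ref_certified n = true ->
  forall p, poly_le (S n) p -> p 0 = 0 ->
  exists q, poly_le n q /\ q 1 = p 1 /\
    0 <= RInt (fun s => coercivity_gap (p s) (q s)) 0 1.
Proof.
  intros Hcert p Hp Hp0.
  destruct (ldl_certifies_sound _ _ _ _ _ Hcert (mat_of_tabulate n _)) as [Hsum Hpos].
  set (T := mat_of (ref_choice n)) in *.
  destruct (poly_le_vanishing_at_0 n p Hp Hp0) as [b Hb].
  exists (fun s => sum_f_R0 (fun j => lin_map T b n j * s ^ j) n). split; [|split].
  - exists (lin_map T b n); reflexivity.
  - rewrite Hb. transitivity (sum_f_R0 (lin_map T b n) n); [|rewrite Hsum];
      apply sum_eq; intros; rewrite pow1; ring.
  - erewrite is_RInt_unique.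
    2:{ eapply is_RInt_ext; [|apply is_RInt_coercivity_gap_monomials].
        intros s _; rewrite Hb; reflexivity. }
    rewrite <- bilin_ref_form. apply Hpos.
Qed.

Lemma reference_choice M : (1 <= M <= 13)%nat ->
  forall p, poly_le M p -> p 0 = 0 ->
  exists q, poly_le (M - 1) q /\ q 1 = p 1 /\
    0 <= RInt (fun s => coercivity_gap (p s) (q s)) 0 1.
Proof.
  intros HM. destruct M as [|n]; [lia|]. replace (S n - 1)%nat with n by lia.
  apply certified_reference_choice, ref_certified_le_12; lia.
Qed.

Lemma continuity_coercivity_gap f g : continuity f -> continuity g ->
  continuity (fun t => coercivity_gap (f t) (g t)).
Proof.
  intros Hf Hg.
  assert (Hsq : forall h c, continuity h -> continuity (fun t => h t ^ 2 / c)).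
  { intros h c Hh x. apply continuity_pt_ext with (fun t => h t * h t * / c).
    - intros; unfold Rdiv; ring.
    - apply continuity_pt_mult; [apply continuity_pt_mult; apply Hh|].
      apply continuity_pt_const; intros ? ?; reflexivity. }
  unfold coercivity_gap.
  apply continuity_minus; [apply continuity_minus|]; [apply continuity_mult; assumption| |];
    apply Hsq; [apply continuity_minus|]; assumption.
Qed.

Lemma ex_RInt_continuity f a b : continuity f -> ex_RInt f a b.
Proof.
  intros Hf. apply (@ex_RInt_continuous R_CompleteNormedModule).
  intros z _; apply continuity_pt_filterlim, Hf.
Qed.

Lemma element_choice M u v p : (1 <= M <= 13)%nat -> u <> v ->
  poly_le M p -> p u = 0 ->
  exists q, poly_le (M - 1) q /\ q v = p v /\
    0 <= RInt (fun t => coercivity_gap (p t) (q t)) (Rmin u v) (Rmax u v).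
Proof.
  intros HM Huv Hp Hpu.
  set (w := v - u). assert (Hw : w <> 0) by (unfold w; lra).
  destruct (reference_choice M HM (fun s => p (w * s + u))) as [qh [Hqh [Hqh1 HX]]].
  { apply poly_le_comp_affine, Hp. }
  { rewrite Rmult_0_r, Rplus_0_l; exact Hpu. }
  set (q := fun t => qh (/ w * t + - u / w)).
  assert (Hq_rescaled : forall s, q (w * s + u) = qh s)
    by (intros s; unfold q; f_equal; field; exact Hw).
  assert (Hcont : continuity (fun t => coercivity_gap (p t) (q t))).
  { apply continuity_coercivity_gap;
      [apply (poly_le_continuity M)|apply (poly_le_continuity (M - 1))];
      [|apply poly_le_comp_affine]; assumption. }
  assert (Hint : RInt (fun t => coercivity_gap (p t) (q t)) u v =
                 w * RInt (fun s => coercivity_gap (p (w * s + u)) (qh s)) 0 1).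
  { replace u with (w * 0 + u) at 1 by ring.
    replace v with (w * 1 + u) at 1 by (unfold w; ring).
    rewrite <- RInt_comp_lin, RInt_scal; [|apply ex_RInt_continuity..].
    - change (scal w ?I) with (w * I). f_equal.
      apply RInt_ext; intros s _. rewrite Hq_rescaled. reflexivity.
    - apply (continuity_comp (fun s => w * s + u) (fun t => coercivity_gap (p t) (q t)));
        [|exact Hcont].
      apply derivable_continuous; reg.
    - exact Hcont. }
  exists q. split; [apply poly_le_comp_affine, Hqh|split].
  - replace v with (w * 1 + u) by (unfold w; ring). rewrite Hq_rescaled. exact Hqh1.
  - destruct (Rle_lt_dec u v) as [Hle|Hlt].
    + rewrite Rmin_left, Rmax_right, Hint by lra.
      apply Rmult_le_pos; [unfold w; lra|exact HX].
    + rewrite Rmin_right, Rmax_left by lra.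
      rewrite <- opp_RInt_swap, Hint by exact (ex_RInt_continuity _ _ _ Hcont).
      change (0 <= - (w * RInt (fun s => coercivity_gap (p (w * s + u)) (qh s)) 0 1)).
      assert (w < 0) by (unfold w; lra). nra.
Qed.

(** * Piecewise functions on the interface *)

Definition paste (g1 g2 : R -> R) (v t : R) : R := if Rle_dec t v then g1 t else g2 t.

Lemma continuity_paste g1 g2 v : continuity g1 -> continuity g2 -> g1 v = g2 v ->
  continuity (paste g1 g2 v).
Proof.
  intros H1 H2 Hv t.
  destruct (Rtotal_order t v) as [Hlt|[<-|Hgt]].
  - apply continuity_pt_locally_ext with (f := g1) (a := v - t); [lra| |apply H1].
    intros y Hy. unfold paste, Rdist in *. apply Rabs_def2 in Hy.
    destruct (Rle_dec y v); [reflexivity|lra].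
  - intros eps Heps.
    destruct (H1 t eps Heps) as [a1 [Ha1 Hg1]], (H2 t eps Heps) as [a2 [Ha2 Hg2]].
    exists (Rmin a1 a2). split; [apply Rmin_pos; assumption|].
    intros y [Dy Hy]. unfold paste. destruct (Rle_dec t t) as [_|]; [|lra].
    destruct (Rle_dec y t).
    + apply Hg1. split; [exact Dy|]. eapply Rlt_le_trans; [exact Hy|apply Rmin_l].
    + rewrite Hv. apply Hg2. split; [exact Dy|]. eapply Rlt_le_trans; [exact Hy|apply Rmin_r].
  - apply continuity_pt_locally_ext with (f := g2) (a := t - v); [lra| |apply H2].
    intros y Hy. unfold paste, Rdist in *. apply Rabs_def2 in Hy.
    destruct (Rle_dec y v); [lra|reflexivity].
Qed.

Definition has_cont_ext (L : R) (f : R -> R) : Prop :=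
  exists g, continuity g /\ forall t, 0 <= t <= L -> f t = g t.

Lemma has_cont_ext_ex_RInt L f a b : has_cont_ext L f -> 0 <= a -> a <= b -> b <= L ->
  ex_RInt f a b.
Proof.
  intros [g [Hg Hfg]] Ha Hab Hb. apply ex_RInt_ext with g.
  - intros t Ht. rewrite Rmin_left, Rmax_right in Ht by lra. symmetry; apply Hfg; lra.
  - apply ex_RInt_continuity, Hg.
Qed.

Lemma has_cont_ext_const L c : has_cont_ext L (fun _ => c).
Proof.
  exists (fun _ => c); split; [|reflexivity].
  apply continuity_const; intros ? ?; reflexivity.
Qed.

Lemma has_cont_ext_lift2 (op : R -> R -> R) L f g :
  (forall u v, continuity u -> continuity v -> continuity (fun t => op (u t) (v t))) ->
  has_cont_ext L f -> has_cont_ext L g -> has_cont_ext L (fun t => op (f t) (g t)).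
Proof.
  intros Hop [f' [Hf Hff']] [g' [Hg Hgg']]. exists (fun t => op (f' t) (g' t)).
  split; [apply Hop; assumption|]. intros t Ht; rewrite Hff', Hgg'; trivial.
Qed.

Ltac has_cont_ext_tac :=
  repeat match goal with
  | |- has_cont_ext _ (fun t => coercivity_gap (@?a t) (@?b t)) =>
      apply (has_cont_ext_lift2 coercivity_gap _ a b continuity_coercivity_gap)
  | |- has_cont_ext _ (fun t => @?a t + @?b t) =>
      apply (has_cont_ext_lift2 Rplus _ a b continuity_plus)
  | |- has_cont_ext _ (fun t => @?a t - @?b t) =>
      apply (has_cont_ext_lift2 Rminus _ a b continuity_minus)
  | |- has_cont_ext _ (fun t => @?a t * @?b t) =>
      apply (has_cont_ext_lift2 Rmult _ a b continuity_mult)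
  | H : has_cont_ext _ ?f |- has_cont_ext _ (fun t => ?f t) => exact H
  | |- has_cont_ext _ (fun _ => _) => apply has_cont_ext_const
  | |- has_cont_ext _ _ => assumption
  end.

Ltac ex_RInt_tac := eapply has_cont_ext_ex_RInt; [has_cont_ext_tac|lra..].

Lemma RInt_Rplus f g a b : ex_RInt f a b -> ex_RInt g a b ->
  RInt (fun t => f t + g t) a b = RInt f a b + RInt g a b.
Proof. exact (RInt_plus f g a b). Qed.

Lemma RInt_Rminus f g a b : ex_RInt f a b -> ex_RInt g a b ->
  RInt (fun t => f t - g t) a b = RInt f a b - RInt g a b.
Proof. exact (RInt_minus f g a b). Qed.

Lemma RInt_Rmult_l f a b k : ex_RInt f a b -> RInt (fun t => k * f t) a b = k * RInt f a b.
Proof. exact (RInt_scal f a b k). Qed.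

Lemma coercivity_gap_le_projection_defect e p y :
  coercivity_gap e y + 1/100 * (e * e) <= (e + p) * y - (e - p) * p.
Proof. unfold coercivity_gap. pose proof (pow2_ge_0 (p + (y - e) / 2)). nra. Qed.

Lemma sqr_le_coercivity_gap e y : y * y <= 36 * (e * e) - 8 * coercivity_gap e y.
Proof.
  unfold coercivity_gap. pose proof (pow2_ge_0 (y - 6 * e)). pose proof (Rle_0_sqr e). nra.
Qed.

Lemma L2_bounds_of_coercivity_gap L E P psi : 0 < L ->
  has_cont_ext L E -> has_cont_ext L P -> has_cont_ext L psi ->
  L2ip L (fun t => E t - P t) P = 0 ->
  0 <= RInt (fun t => coercivity_gap (E t) (psi t)) 0 L ->
  L2ip L (fun t => E t + P t) psi >= 1/100 * L2norm L E ^ 2 /\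
  L2norm L psi <= 6 * L2norm L E.
Proof.
  intros HL HE HP Hpsi Horth Hgap. unfold L2norm, L2ip in *.
  assert (HEE : 0 <= RInt (fun t => E t * E t) 0 L).
  { apply RInt_ge_0; [lra|ex_RInt_tac|]. intros; apply Rle_0_sqr. }
  split.
  - rewrite pow2_sqrt by exact HEE.
    assert (Hlow : RInt (fun t => coercivity_gap (E t) (psi t) + 1/100 * (E t * E t)) 0 L <=
                   RInt (fun t => (E t + P t) * psi t - (E t - P t) * P t) 0 L).
    { apply RInt_le; [lra|ex_RInt_tac|ex_RInt_tac|].
      intros; apply coercivity_gap_le_projection_defect. }
    rewrite RInt_Rminus, Horth, RInt_Rplus, RInt_Rmult_l in Hlow by ex_RInt_tac.
    apply Rle_ge. lra.
  - rewrite <- (sqrt_square 6), <- sqrt_mult_alt by lra. apply sqrt_le_1_alt.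
    assert (Hup : RInt (fun t => psi t * psi t) 0 L <=
                  RInt (fun t => 36 * (E t * E t) - 8 * coercivity_gap (E t) (psi t)) 0 L).
    { apply RInt_le; [lra|ex_RInt_tac|ex_RInt_tac|].
      intros; apply sqr_le_coercivity_gap. }
    rewrite RInt_Rminus, !RInt_Rmult_l in Hup by ex_RInt_tac. lra.
Qed.

Lemma mesh1d_mono L kappa h n x : 0 < kappa -> 0 < h -> mesh1d L kappa h n x ->
  forall i j, (i <= j)%nat -> (j <= n)%nat -> x i <= x j.
Proof.
  intros Hk Hh (_ & _ & _ & Hstep) i j Hij. induction Hij as [|j Hij IH]; intros Hj; [lra|].
  destruct (Hstep j) as [Hlow _]; [lia|].
  assert (0 < kappa * h) by (apply Rmult_lt_0_compat; assumption).
  specialize (IH ltac:(lia)). lra.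
Qed.

Lemma Ytr_has_cont_ext M L kappa h n x f : 0 < kappa -> 0 < h ->
  mesh1d L kappa h n x -> Ytr M n x f -> has_cont_ext L f.
Proof.
  intros Hk Hh Hmesh Hf.
  pose proof (mesh1d_mono _ _ _ _ _ Hk Hh Hmesh) as Hmono.
  destruct Hmesh as (_ & Hx0 & HxL & _).
  assert (Hupto : forall m, (m <= n)%nat -> exists g, continuity g /\
                    forall t, x O <= t <= x m -> f t = g t).
  { induction m as [|m IH]; intros Hm.
    - exists (fun _ => f (x O)); split.
      + apply continuity_const; intros ? ?; reflexivity.
      + intros t Ht; replace t with (x O) by lra; reflexivity.
    - destruct IH as [g [Hg Hfg]]; [lia|].
      destruct (Hf m) as [p [Hp Hfp]]; [lia|].
      assert (x O <= x m <= x (S m)) by (split; apply Hmono; lia).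
      exists (paste g p (x m)); split.
      + apply continuity_paste; [exact Hg|eapply poly_le_continuity; eassumption|].
        rewrite <- Hfg, Hfp; lra.
      + intros t Ht; unfold paste; destruct (Rle_dec t (x m)); [apply Hfg|apply Hfp]; lra. }
  destruct (Hupto n (le_n n)) as [g [Hg Hfg]].
  exists g; split; [exact Hg|]. rewrite Hx0, HxL in Hfg; exact Hfg.
Qed.

Definition splice (q0 f q1 : R -> R) (a b : R) : R -> R := paste (paste q0 f a) q1 b.

Section Splice.
Variables (q0 f q1 : R -> R) (a b : R).
Hypotheses (Hab : a <= b) (Hq0 : q0 a = f a) (Hq1 : q1 b = f b).

Lemma splice_left t : t <= a -> splice q0 f q1 a b t = q0 t.
Proof.
  intros Ht; unfold splice, paste.
  destruct (Rle_dec t b); [|lra]. destruct (Rle_dec t a); [reflexivity|lra].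
Qed.

Lemma splice_mid t : a <= t <= b -> splice q0 f q1 a b t = f t.
Proof.
  intros Ht; unfold splice, paste.
  destruct (Rle_dec t b); [|lra]. destruct (Rle_dec t a); [|reflexivity].
  replace t with a by lra. exact Hq0.
Qed.

Lemma splice_right t : b <= t -> splice q0 f q1 a b t = q1 t.
Proof.
  intros Ht; destruct (Rle_lt_dec t b) as [Htb|Htb].
  - replace t with b by lra. rewrite splice_mid by lra. symmetry; exact Hq1.
  - unfold splice, paste. destruct (Rle_dec t b); [lra|reflexivity].
Qed.
End Splice.

Lemma has_cont_ext_splice L q0 f q1 a b : 0 <= a <= b -> b <= L ->
  continuity q0 -> continuity q1 -> has_cont_ext L f ->
  q0 a = f a -> q1 b = f b -> has_cont_ext L (splice q0 f q1 a b).
Proof.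
  intros Hab HbL Hq0 Hq1 [g [Hg Hfg]] Ha Hb.
  assert (Hga : q0 a = g a) by (rewrite Ha; apply Hfg; lra).
  assert (Hgb : q1 b = g b) by (rewrite Hb; apply Hfg; lra).
  exists (splice q0 g q1 a b). split.
  - apply continuity_paste; [apply continuity_paste; assumption|exact Hq1|].
    unfold paste; destruct (Rle_dec b a); [replace b with a in * by lra|]; congruence.
  - intros t Ht. destruct (Rle_lt_dec t a); [|destruct (Rle_lt_dec t b)].
    + rewrite !splice_left by (lra || assumption). reflexivity.
    + rewrite !splice_mid by (lra || assumption). apply Hfg; lra.
    + rewrite !splice_right by (lra || assumption). reflexivity.
Qed.

Lemma RInt_coercivity_gap_splice_nonneg L eta q0 q1 a b : 0 <= a <= b -> b <= L ->
  continuity q0 -> continuity q1 -> has_cont_ext L eta ->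
  q0 a = eta a -> q1 b = eta b ->
  0 <= RInt (fun t => coercivity_gap (eta t) (q0 t)) 0 a ->
  0 <= RInt (fun t => coercivity_gap (eta t) (q1 t)) b L ->
  0 <= RInt (fun t => coercivity_gap (eta t) (splice q0 eta q1 a b t)) 0 L.
Proof.
  intros Hab HbL Hq0 Hq1 Heta Ha Hb Hleft Hright.
  pose proof (has_cont_ext_splice L q0 eta q1 a b Hab HbL Hq0 Hq1 Heta Ha Hb) as Hpsi.
  set (psi := splice q0 eta q1 a b) in *.
  set (F := fun t => coercivity_gap (eta t) (psi t)).
  assert (H0a : RInt F 0 a = RInt (fun t => coercivity_gap (eta t) (q0 t)) 0 a).
  { apply RInt_ext; intros t Ht. rewrite Rmin_left, Rmax_right in Ht by lra.
    unfold F, psi; rewrite splice_left by (lra || assumption). reflexivity. }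
  assert (HbL' : RInt F b L = RInt (fun t => coercivity_gap (eta t) (q1 t)) b L).
  { apply RInt_ext; intros t Ht. rewrite Rmin_left, Rmax_right in Ht by lra.
    unfold F, psi; rewrite splice_right by (lra || assumption). reflexivity. }
  (* On [a, b] the gap is [99/100 eta^2]. *)
  assert (Hab' : 0 <= RInt F a b).
  { apply RInt_ge_0; [lra|unfold F; ex_RInt_tac|]. intros t Ht.
    unfold F, psi, coercivity_gap; rewrite splice_mid by (lra || assumption).
    pose proof (pow2_ge_0 (eta t)). lra. }
  assert (Hsplit : RInt F 0 a + RInt F a b + RInt F b L = RInt F 0 L).
  { assert (Hex : forall u v, 0 <= u <= v -> v <= L -> ex_RInt F u v)
      by (intros; unfold F; ex_RInt_tac).
    rewrite <- (RInt_Chasles F 0 b L), <- (RInt_Chasles F 0 a b) by (apply Hex; lra).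
    reflexivity. }
  change (0 <= RInt F 0 L). lra.
Qed.

Lemma Wtil_splice M L kappa h n x eta q0 q1 : 0 < kappa -> 0 < h ->
  mesh1d L kappa h n x -> (2 <= n)%nat -> Ytr M n x eta ->
  poly_le (M - 1) q0 -> poly_le (M - 1) q1 ->
  q0 (x 1%nat) = eta (x 1%nat) -> q1 (x (pred n)) = eta (x (pred n)) ->
  Wtil M n x (splice q0 eta q1 (x 1%nat) (x (pred n))).
Proof.
  intros Hk Hh Hmesh Hn Heta Hq0 Hq1 Ha Hb.
  pose proof (mesh1d_mono _ _ _ _ _ Hk Hh Hmesh) as Hmono.
  assert (Hab : x 1%nat <= x (pred n)) by (apply Hmono; lia).
  assert (Hleft : forall t, t <= x 1%nat -> splice q0 eta q1 (x 1%nat) (x (pred n)) t = q0 t)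
    by (intros; apply splice_left; assumption).
  assert (Hright : forall t, x (pred n) <= t ->
                     splice q0 eta q1 (x 1%nat) (x (pred n)) t = q1 t)
    by (intros; apply splice_right; assumption).
  split; [|split].
  - intros i Hi.
    destruct (Nat.eq_dec i 0) as [->|Hi0]; [|destruct (Nat.eq_dec i (pred n)) as [->|Hin]].
    + exists q0; split; [apply (poly_le_mono (M - 1)); [lia|exact Hq0]|].
      intros t Ht; apply Hleft; lra.
    + exists q1; split; [apply (poly_le_mono (M - 1)); [lia|exact Hq1]|].
      intros t Ht; apply Hright; lra.
    + destruct (Heta i Hi) as [p [Hp Hetap]]. exists p; split; [exact Hp|].
      assert (x 1%nat <= x i /\ x (S i) <= x (pred n)) by (split; apply Hmono; lia).
      intros t Ht. rewrite splice_mid by (lra || assumption). apply Hetap, Ht.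
  - exists q0; split; [exact Hq0|]. intros t Ht; apply Hleft; lra.
  - exists q1; split; [exact Hq1|]. intros t Ht; apply Hright; lra.
Qed.

Lemma RInt_coercivity_gap_agree p eta q a b : a <= b ->
  (forall t, a <= t <= b -> eta t = p t) ->
  RInt (fun t => coercivity_gap (p t) (q t)) a b =
  RInt (fun t => coercivity_gap (eta t) (q t)) a b.
Proof.
  intros Hab Hp. apply RInt_ext; intros t Ht.
  rewrite Rmin_left, Rmax_right in Ht by lra. rewrite Hp by lra. reflexivity.
Qed.

Lemma end_element_modification M L kappa h n x eta : (1 <= M <= 13)%nat ->
  0 < kappa -> 0 < h -> mesh1d L kappa h n x ->
  Ytr M n x eta -> eta 0 = 0 -> eta L = 0 ->
  exists psi, Wtil M n x psi /\ has_cont_ext L psi /\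
    0 <= RInt (fun t => coercivity_gap (eta t) (psi t)) 0 L.
Proof.
  intros HM Hk Hh Hmesh Heta Heta0 HetaL.
  pose proof (mesh1d_mono _ _ _ _ _ Hk Hh Hmesh) as Hmono.
  pose proof (Ytr_has_cont_ext _ _ _ _ _ _ _ Hk Hh Hmesh Heta) as Hext.
  pose proof Hmesh as (Hn & Hx0 & HxL & Hstep).
  assert (Hkh : 0 < kappa * h) by (apply Rmult_lt_0_compat; assumption).
  assert (Hx1 : 0 < x 1%nat) by (destruct (Hstep 0%nat); [lia|lra]).
  assert (HxL' : x (pred n) < L).
  { destruct (Hstep (pred n)) as [Hlast _]; [lia|].
    replace (S (pred n)) with n in Hlast by lia. lra. }
  destruct (Heta 0%nat) as [p0 [Hp0 Hetap0]]; [lia|].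
  destruct (Heta (pred n)) as [p1 [Hp1 Hetap1]]; [lia|].
  replace (S (pred n)) with n in Hetap1 by lia. rewrite Hx0 in Hetap0. rewrite HxL in Hetap1.
  destruct (element_choice M 0 (x 1%nat) p0 HM ltac:(lra) Hp0) as [q0 (Hq0 & Hq0a & Hgap0)].
  { rewrite <- Hetap0; [exact Heta0|lra]. }
  destruct (element_choice M L (x (pred n)) p1 HM ltac:(lra) Hp1) as [q1 (Hq1 & Hq1b & Hgap1)].
  { rewrite <- Hetap1; [exact HetaL|lra]. }
  rewrite Rmin_left, Rmax_right, (RInt_coercivity_gap_agree p0 eta) in Hgap0
    by (lra || exact Hetap0).
  rewrite Rmin_right, Rmax_left, (RInt_coercivity_gap_agree p1 eta) in Hgap1
    by (lra || exact Hetap1).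
  rewrite <- Hetap0 in Hq0a by lra. rewrite <- Hetap1 in Hq1b by lra.
  assert (Hcq0 : continuity q0) by (eapply poly_le_continuity; exact Hq0).
  assert (Hcq1 : continuity q1) by (eapply poly_le_continuity; exact Hq1).
  destruct (Nat.eq_dec n 1) as [->|Hn2].
  - assert (Hq0M : poly_le M q0) by (apply (poly_le_mono (M - 1)); [lia|exact Hq0]).
    exists q0. split; [|split].
    + split; [|split]; [intros i Hi; replace i with 0%nat by lia| |];
        exists q0; split; try assumption; intros; reflexivity.
    + exists q0; split; [exact Hcq0|reflexivity].
    + rewrite <- HxL. exact Hgap0.
  - exists (splice q0 eta q1 (x 1%nat) (x (pred n))).
    assert (Hab : x 1%nat <= x (pred n)) by (apply Hmono; lia).
    split; [|split].
    + apply (Wtil_splice M L kappa h); try assumption; lia.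
    + apply has_cont_ext_splice; (lra || assumption).
    + apply RInt_coercivity_gap_splice_nonneg; (lra || assumption).
Qed.

Theorem lemma4 :
  forall (M : nat), (1 <= M <= 13)%nat ->
  forall (L kappa : R), 0 < L -> 0 < kappa <= 1 ->
  exists c1 c2 : R, 0 < c1 /\ 0 < c2 /\
  forall (h : R) (nk : nat) (xk : nat -> R) (nl : nat) (xl : nat -> R),
    0 < h ->
    mesh1d L kappa h nk xk ->
    mesh1d L kappa h nl xl ->
    forall eta : R -> R,
      Ytr M nl xl eta -> eta 0 = 0 -> eta L = 0 ->
      forall pi_eta : R -> R,
        is_L2proj L (Wtil M nk xk) eta pi_eta ->
        exists psi : R -> R,
          Wtil M nl xl psi /\
          L2ip L (fun t => eta t + pi_eta t) psi >= c1 * (L2norm L eta) ^ 2 /\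
          L2norm L psi <= c2 * L2norm L eta.
Proof.
  intros M HM L kappa HL [Hk _]. exists (1/100), 6. split; [lra|split; [lra|]].
  intros h nk xk nl xl Hh Hmk Hml eta Heta Heta0 HetaL pi_eta [Hpi Horth].
  destruct (end_element_modification M L kappa h nl xl eta HM Hk Hh Hml Heta Heta0 HetaL)
    as [psi (Hpsi & Hpsi_ext & Hgap)].
  exists psi. split; [exact Hpsi|].
  apply L2_bounds_of_coercivity_gap; try assumption.
  - exact (Ytr_has_cont_ext _ _ _ _ _ _ _ Hk Hh Hml Heta).
  - exact (Ytr_has_cont_ext _ _ _ _ _ _ _ Hk Hh Hmk (proj1 Hpi)).
  - exact (Horth pi_eta Hpi).
Qed.
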